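(* Let $A,B,C$ be dendrons. If $AB=AC$, then $B=C$.
   Context: A finite dynamical system (FDS) is a function $A:S_A\to S_A$ on a finite set, considered up to isomorphism of functional graphs (arcs $x\to A(x)$). The product $AB$ acts on $S_A\times S_B$ by $(a,b)\mapsto(A(a),B(b))$. A dendron is an FDS whose functional graph is connected and which has a fixpoint (a state $s$ with $A(s)=s$). *)

From mathcomp Require Import all_boot.
Set Implicit Arguments. Unset Strict Implicit. Unset Printing Implicit Defensive.

(* A finite dynamical system is a function f : T -> T on a finite type T. *)

Definition fds_iso (T U : finType) (f : T -> T) (g : U -> U) : Prop :=
  exists h : T -> U, bijective h /\ forall x, h (f x) = g (h x).

Definition fds_prod (T U : finType) (f : T -> T) (g : U -> U) : T * U -> T * U :=
  fun p => (f p.1, g p.2).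

Definition fds_adj (T : finType) (f : T -> T) : rel T :=
  fun x y => (f x == y) || (f y == x).

Definition fds_connected (T : finType) (f : T -> T) : Prop :=
  forall x y : T, connect (fds_adj f) x y.

Definition dendron (T : finType) (f : T -> T) : Prop :=
  fds_connected f /\ exists s : T, f s = s.

From mathcomp Require Import all_boot.
Set Implicit Arguments. Unset Strict Implicit. Unset Printing Implicit Defensive.

(* Lovász's counting argument.  Homomorphisms X -> AB are pairs of
   homomorphisms X -> A and X -> B, and A has a homomorphism from every X
   (the constant map to its fixpoint), so AB = AC forces hom(X, B) = hom(X, C)
   for every X.  Sorting the homomorphisms out of X by their kernel, those
   with a given non-trivial kernel correspond to the injective homomorphisms
   out of a strictly smaller system (the image of any one of them), so by
   induction on |X| the numbers of injective homomorphisms X -> B and X -> C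
   agree too.  Taking X = B and X = C yields injections B -> C and C -> B,
   whence an isomorphism. *)

Definition fker (T U : finType) (k : T -> U) : {set T * T} := [set p | k p.1 == k p.2].

Definition diag (T : finType) : {set T * T} := [set p | p.1 == p.2].

Lemma same_fker_eq (T U V : finType) (k : T -> U) (m : T -> V) :
  fker m = fker k -> forall x1 x2, (m x1 == m x2) = (k x1 == k x2).
Proof.
by move=> E x1 x2; have := congr1 (fun A : {set T * T} => (x1, x2) \in A) E; rewrite !inE.
Qed.

Lemma fker_eq_diag (T U : finType) (k : T -> U) : (fker k == diag T) = injectiveb k.
Proof.
apply/eqP/injectiveP => [E x1 x2 k_x12 | k_inj].
  have : (x1, x2) \in fker k by rewrite inE k_x12.
  by rewrite E inE => /eqP.
by apply/setP => -[x1 x2]; rewrite !inE (inj_eq k_inj).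
Qed.

Section Homomorphisms.

Variables (T U : finType) (f : T -> T) (g : U -> U).

Definition homs : {set {ffun T -> U}} :=
  [set k : {ffun T -> U} | [forall x, k (f x) == g (k x)]].

Definition injs : {set {ffun T -> U}} := [set k in homs | injectiveb k].

Definition homs_ker (th : {set T * T}) : {set {ffun T -> U}} :=
  [set k in homs | fker k == th].

Lemma homsP (k : {ffun T -> U}) : reflect (forall x, k (f x) = g (k x)) (k \in homs).
Proof. by rewrite inE; apply: (iffP forallP) => k_hom x; apply/eqP. Qed.

Lemma card_homs_partition : #|homs| = \sum_(th : {set T * T}) #|homs_ker th|.
Proof.
rewrite -sum1_card (partition_big (fun k : {ffun T -> U} => fker k) predT) //=.
by apply: eq_bigr => th _; rewrite -sum1_card; apply: eq_bigl => k; rewrite !inE.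
Qed.

Lemma homs_ker_diag : homs_ker (diag T) = injs.
Proof. by apply/setP => k; rewrite !inE fker_eq_diag. Qed.

Lemma card_homs_gt0 (s : U) : g s = s -> 0 < #|homs|.
Proof. by move=> fix_s; apply/card_gt0P; exists [ffun=> s]; apply/homsP => x; rewrite !ffunE. Qed.

End Homomorphisms.

Lemma card_homs_conj_le (T U V : finType) (f : T -> T) (g : U -> U) (g' : V -> V)
    (h : U -> V) :
  injective h -> (forall y, h (g y) = g' (h y)) -> #|homs f g| <= #|homs f g'|.
Proof.
move=> h_inj h_conj; pose push (k : {ffun T -> U}) := [ffun x => h (k x)].
have push_inj : injective push.
  by move=> k1 k2 /ffunP E; apply/ffunP => x; apply: h_inj; have := E x; rewrite !ffunE.
rewrite -(card_imset _ push_inj); apply/subset_leq_card/subsetP => _ /imsetP [k /homsP k_hom ->].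
by apply/homsP => x; rewrite !ffunE k_hom h_conj.
Qed.

Lemma card_homs_iso (T U V : finType) (f : T -> T) (g : U -> U) (g' : V -> V) :
  fds_iso g g' -> #|homs f g| = #|homs f g'|.
Proof.
case=> h [[h' hK h'K] h_conj]; apply/anti_leq/andP; split.
  exact: card_homs_conj_le (can_inj hK) h_conj.
apply: card_homs_conj_le (can_inj h'K) _ => y.
by rewrite -{1}(h'K y) -h_conj hK.
Qed.

Lemma card_homs_prod (T U1 U2 : finType) (f : T -> T) (g1 : U1 -> U1) (g2 : U2 -> U2) :
  #|homs f (fds_prod g1 g2)| = #|homs f g1| * #|homs f g2|.
Proof.
rewrite -cardsX.
pose pair (k : {ffun T -> U1} * {ffun T -> U2}) : {ffun T -> U1 * U2} :=
  [ffun x => (k.1 x, k.2 x)].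
have pair_inj : injective pair.
  move=> [k1 k2] [m1 m2] /ffunP E.
  by congr (_, _); apply/ffunP => x; have := E x; rewrite !ffunE => -[].
rewrite -(card_imset _ pair_inj); apply: eq_card => k; apply/idP/imsetP.
  move=> /homsP k_hom; exists ([ffun x => (k x).1], [ffun x => (k x).2]).
    by rewrite inE; apply/andP; split; apply/homsP => x; rewrite !ffunE k_hom.
  by apply/ffunP => x; rewrite !ffunE; case: (k x).
case=> -[k1 k2] /setXP [/homsP k1_hom /homsP k2_hom] ->.
by apply/homsP => x; rewrite !ffunE k1_hom k2_hom.
Qed.

Section ImageSystem.

Variables (T U : finType) (f : T -> T) (k : {ffun T -> U}).

Definition corestr (x : T) : {u : U | u \in codom k} := exist _ (k x) (codom_f k x).

Definition image_fds (y : {u : U | u \in codom k}) : {u : U | u \in codom k} :=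
  corestr (f (iinv (valP y))).

Lemma corestr_iinv (y : {u : U | u \in codom k}) : corestr (iinv (valP y)) = y.
Proof. by apply: val_inj; rewrite /= f_iinv. Qed.

Lemma card_image_fds_lt : ~~ injectiveb k -> #|{: {u : U | u \in codom k}}| < #|T|.
Proof.
move=> k_ninj; rewrite card_sig ltn_neqAle leq_image_card andbT.
by apply: contra k_ninj => /image_injP k_inj; apply/injectiveP => x1 x2; apply: k_inj.
Qed.

Variable g : U -> U.
Hypothesis k_hom : k \in homs f g.

Lemma corestr_hom (x : T) : corestr (f x) = image_fds (corestr x).
Proof.
apply: val_inj => /=; set x' := iinv _; have k_x' : k x' = k x by rewrite f_iinv.
by rewrite !(homsP _ _ _ k_hom) k_x'.
Qed.

(* Every homomorphism with the same kernel as k factors uniquely through the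
   corestriction of k, by an injective homomorphism. *)
Lemma card_homs_ker_image (V : finType) (h : V -> V) :
  #|homs_ker f h (fker k)| = #|injs image_fds h|.
Proof.
pose lift (m : {ffun {u : U | u \in codom k} -> V}) := [ffun x => m (corestr x)].
have lift_inj : injective lift.
  move=> m1 m2 /ffunP E; apply/ffunP => y.
  by rewrite -(corestr_iinv y); have := E (iinv (valP y)); rewrite !ffunE.
rewrite -(card_imset _ lift_inj); apply: eq_card => m'; apply/idP/imsetP; last first.
  case=> m /setIdP [/homsP m_hom /injectiveP m_inj] ->; rewrite !inE; apply/andP; split.
    by apply/forallP => x; rewrite !ffunE corestr_hom m_hom.
  by apply/eqP/setP => -[x1 x2]; rewrite !inE !ffunE /= (inj_eq m_inj).
case/setIdP => /homsP m'_hom /eqP/same_fker_eq m'_ker.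
have m'_corestr x : m' (iinv (valP (corestr x))) = m' x.
  by apply/eqP; rewrite m'_ker f_iinv.
exists [ffun y => m' (iinv (valP y))]; last by apply/ffunP => x; rewrite !ffunE.
rewrite !inE; apply/andP; split.
  by apply/forallP => y; rewrite !ffunE m'_corestr m'_hom.
apply/injectiveP => y1 y2; rewrite !ffunE => /eqP; rewrite m'_ker !f_iinv.
by move=> /eqP /val_inj.
Qed.

End ImageSystem.

Section HomCountsDetermineIsoType.

Variables (U V : finType) (g : U -> U) (h : V -> V).
Hypothesis same_homs : forall (T : finType) (f : T -> T), #|homs f g| = #|homs f h|.

Lemma card_homs_ker_eq (T : finType) (f : T -> T) (th : {set T * T}) :
    (forall (Y : finType) (fY : Y -> Y), #|Y| < #|T| -> #|injs fY g| = #|injs fY h|) ->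
  th != diag T -> #|homs_ker f g th| = #|homs_ker f h th|.
Proof.
move=> smaller_injs th_ndiag.
have realized (W : finType) (w : W -> W) k :
    k \in homs_ker f w th -> #|homs_ker f g th| = #|homs_ker f h th|.
  case/setIdP => k_hom /eqP k_ker; move: th_ndiag; rewrite -k_ker fker_eq_diag => k_ninj.
  by rewrite !(card_homs_ker_image k_hom) smaller_injs ?card_image_fds_lt.
case: (set_0Vmem (homs_ker f g th)) => [no_g | [k]]; last exact: realized.
case: (set_0Vmem (homs_ker f h th)) => [no_h | [k]]; last exact: realized.
by rewrite no_g no_h !cards0.
Qed.

Lemma card_injs_eq (T : finType) (f : T -> T) : #|injs f g| = #|injs f h|.
Proof.
have [n] := ubnP #|T|; elim: n => // n IHn in T f *; rewrite ltnS => T_le.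
have := same_homs f; rewrite !card_homs_partition.
rewrite (bigD1 (diag T)) // [in RHS](bigD1 (diag T)) //= !homs_ker_diag.
rewrite [X in _ + X = _](eq_bigr (fun th => #|homs_ker f h th|)) => [/addIn // | th th_ndiag].
apply: card_homs_ker_eq th_ndiag => Y fY Y_lt; apply: IHn.
exact: leq_trans Y_lt T_le.
Qed.

Lemma card_injs_id_gt0 (T : finType) (f : T -> T) : 0 < #|injs f f|.
Proof.
apply/card_gt0P; exists [ffun x => x]; rewrite inE; apply/andP; split.
  by apply/homsP => x; rewrite !ffunE.
by apply/injectiveP => x1 x2; rewrite !ffunE.
Qed.

Lemma fds_iso_of_card_homs : fds_iso g h.
Proof.
have : 0 < #|injs g h| by rewrite -card_injs_eq card_injs_id_gt0.
case/card_gt0P => k /setIdP [/homsP k_hom /injectiveP k_inj].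
have : 0 < #|injs h g| by rewrite card_injs_eq card_injs_id_gt0.
case/card_gt0P => k' /setIdP [_ /injectiveP k'_inj].
by exists k; split => //; apply: inj_card_bij k_inj (leq_card _ k'_inj).
Qed.

End HomCountsDetermineIsoType.

Theorem mainTheorem12 (TA TB TC : finType) (a : TA -> TA) (b : TB -> TB) (c : TC -> TC) :
  dendron a -> dendron b -> dendron c ->
  fds_iso (fds_prod a b) (fds_prod a c) -> fds_iso b c.
Proof.
move=> [_ [s fix_s]] _ _ iso_ab_ac; apply: fds_iso_of_card_homs => T f.
have := card_homs_iso f iso_ab_ac; rewrite !card_homs_prod => /eqP.
by rewrite eqn_pmul2l; [move=> /eqP | exact: card_homs_gt0 fix_s].
Qed.
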